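(* Let $S$ be a species tree, $(T,\sigma)$ a gene tree, and $\mu:V(T)\to V(S)\cup E(S)$ a reconciliation map without horizontal gene transfer (satisfying (R0), (R1), (R2), (R3.i), (R3.ii)) that in addition satisfies axiom (R4). Let $x,y\in L(T)$ be two genes with $\sigma(x)\neq\sigma(y)$. If $\operatorname{lca}_S(\sigma(x),\sigma(y))\prec_S \mu(\operatorname{lca}_T(x,y))$, then $\operatorname{lca}_T(x,y)$ is a duplication event, i.e., $\mu(\operatorname{lca}_T(x,y))\in E(S)$.
   Context: A planted phylogenetic tree $T$ has a distinguished leaf $0_T$ (the planted root) whose unique neighbour $\rho_T$ is the root; every other non-leaf vertex has at least two children. $L(T)$ denotes the leaves other than $0_T$. For vertices, $a\preceq_T b$ means $b$ lies on the path from $a$ to $0_T$; $\operatorname{lca}_T(A)$ is the $\preceq_T$-minimal vertex that is $\succeq_T$ every element of $A$. A species tree $S$ is a planted phylogenetic tree with planted root $0_S$, root $\rho_S$ and leaf set $\mathscr{S}$ (the species); $V^0(S)$ denotes the inner vertices of $S$ (neither leaves nor $0_S$). The order $\preceq_S$ is extended to $V(S)\cup E(S)$ by regarding each edge $e=pq$ ($q$ a child of $p$) as lying strictly between $q$ and $p$: $q\prec_S e\prec_S p$, a vertex $w$ satisfies $w\prec_S e$ iff $w\preceq_S q$ and $e\prec_S w$ iff $p\preceq_S w$, and for edges $e=pq,e'=p'q'$, $e\prec_S e'$ iff $p\preceq_S q'$; $\operatorname{lca}_S$ of elements of $V(S)\cup E(S)$ is the $\preceq_S$-minimal vertex above all of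 them. A gene tree $(T,\sigma)$ is a planted phylogenetic tree with $\sigma:L(T)\to\mathscr{S}$. A reconciliation map without horizontal gene transfer is $\mu:V(T)\to V(S)\cup E(S)$ with: (R0) $\mu(v)=0_S$ iff $v=0_T$; (R1) $\mu(v)=\sigma(v)$ for $v\in L(T)$; (R2) $v\prec_T w\Rightarrow\mu(v)\preceq_S\mu(w)$; and for each $v$ with $\mu(v)\in V^0(S)$: (R3.i) $\mu(v)=\operatorname{lca}_S(\mu(v'),\mu(v''))$ for at least two distinct children $v',v''$ of $v$; (R3.ii) $\mu(v'),\mu(v'')$ are $\preceq_S$-incomparable for any two distinct children $v',v''$ of $v$. Axiom (R4): for leaves $x,y,z$ of $T$, if $\mu(\operatorname{lca}_T(x,y))=\mu(\operatorname{lca}_T(x,z))\in V^0(S)$ then $\operatorname{lca}_S(\sigma(x),\sigma(y))=\operatorname{lca}_S(\sigma(x),\sigma(z))$. A vertex $v$ of $T$ is a duplication if $\mu(v)\in E(S)$ and a speciation if $\mu(v)\in V^0(S)$. *)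

From mathcomp Require Import all_boot.
Set Implicit Arguments. Unset Strict Implicit. Unset Printing Implicit Defensive.

(* A planted phylogenetic tree, given by a parent map on a finite vertex type.
   [r0] is the planted root 0_T (its own parent); every vertex reaches 0_T by
   iterating [par] (so the graph with edges {v, par v}, v <> 0_T, is a tree
   rooted at 0_T).  0_T is a leaf: it has exactly one neighbour (its unique
   child rho_T, the root). *)
Record ptree := PTree {
  pvert :> finType;
  par : pvert -> pvert;
  r0 : pvert;
  par_r0 : par r0 = r0;
  reach_r0 : forall v, exists n, iter n par v = r0;
  r0_one_child : #|[set w | (w != r0) && (par w == r0)]| = 1;
  branching : forall v, v != r0 ->
    #|[set w | (w != r0) && (par w == v)]| != 1
}.

Definition children (T : ptree) (v : T) : {set T} :=
  [set w | (w != r0 T) && (par w == v)].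

Definition is_child (T : ptree) (w v : T) : Prop := v \in children w.

Definition is_leaf (T : ptree) (v : T) : Prop :=
  v <> r0 T /\ children v = set0.

Definition is_inner (T : ptree) (v : T) : Prop :=
  v <> r0 T /\ ~ is_leaf v.

Definition tle (T : ptree) (a b : T) : Prop := exists n, iter n (@par T) a = b.
Definition tlt (T : ptree) (a b : T) : Prop := tle a b /\ a <> b.

Definition is_lca (T : ptree) (x y v : T) : Prop :=
  tle x v /\ tle y v /\ forall w, tle x w -> tle y w -> tle v w.

(* Elements of V(S) \cup E(S): [inl w] is the vertex w, [inr q] is the edge
   (par q, q) with q <> 0_S (every edge pq, q a child of p, is named by its
   lower endpoint q). *)
Definition velt (S : ptree) := (S + S)%type.

Definition valid_elt (S : ptree) (a : velt S) : Prop :=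
  match a with inl _ => True | inr q => q <> r0 S end.

Definition sle (S : ptree) (a b : velt S) : Prop :=
  match a, b with
  | inl w, inl w' => tle w w'
  | inl w, inr q => tle w q
  | inr q, inl w => tle (par q) w
  | inr q, inr q' => q = q' \/ tle (par q) q'
  end.
Definition slt (S : ptree) (a b : velt S) : Prop := sle a b /\ a <> b.

Definition is_lcaS (S : ptree) (a b : velt S) (w : S) : Prop :=
  sle a (inl w) /\ sle b (inl w) /\
  forall w', sle a (inl w') -> sle b (inl w') -> tle w w'.

Definition is_inner_image (S : ptree) (a : velt S) : Prop :=
  exists w, a = inl w /\ is_inner w.

Definition reconciliation (T S : ptree) (sigma : T -> S) (mu : T -> velt S)
  : Prop :=
  (forall x, is_leaf x -> is_leaf (sigma x)) /\
  (forall v, valid_elt (mu v)) /\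
  (forall v, mu v = inl (r0 S) <-> v = r0 T) /\
  (forall v, is_leaf v -> mu v = inl (sigma v)) /\
  (forall v w, tlt v w -> sle (mu v) (mu w)) /\
  (forall v w, mu v = inl w -> is_inner w ->
      exists v1 v2, is_child v v1 /\ is_child v v2 /\ v1 <> v2 /\
                    is_lcaS (mu v1) (mu v2) w) /\
  (forall v w, mu v = inl w -> is_inner w ->
      forall v1 v2, is_child v v1 -> is_child v v2 -> v1 <> v2 ->
        ~ sle (mu v1) (mu v2) /\ ~ sle (mu v2) (mu v1)).

Definition axiom_R4 (T S : ptree) (sigma : T -> S) (mu : T -> velt S) : Prop :=
  forall x y z : T, is_leaf x -> is_leaf y -> is_leaf z ->
  forall u1 u2, is_lca x y u1 -> is_lca x z u2 ->
    mu u1 = mu u2 -> is_inner_image (mu u1) ->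
  forall s1 s2, is_lca (sigma x) (sigma y) s1 -> is_lca (sigma x) (sigma z) s2 ->
    s1 = s2.

(* Suppose mu(u) were a vertex w strictly above s = lca_S(sigma x, sigma y).
   Then w is an inner vertex, so by (R3.i) it is the lca of the images of two
   children v1, v2 of u.  Every child v of u lies above a leaf a with
   sigma a <= s: either x itself, or any leaf z below v, since then
   lca_T(x, z) = u and (R4) forces lca_S(sigma x, sigma z) = s.  Hence mu(v) and
   s lie on a common path to the root and are comparable.  If both mu(v1) and
   mu(v2) are below s, so is their lca w; in every other case mu(v1) and mu(v2)
   are comparable, contradicting (R3.ii). *)

From Stdlib Require Import ClassicalEpsilon Classical.
From mathcomp Require Import all_boot.
Set Implicit Arguments. Unset Strict Implicit.

Section PlantedTree.
Variable T : ptree.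
Implicit Types a b c u v w x y z : T.

Lemma iter_par_fixed v n : par v = v -> iter n (@par T) v = v.
Proof. by move=> h; elim: n => //= n ->. Qed.

Lemma iter_par_r0 n : iter n (@par T) (r0 T) = r0 T.
Proof. exact/iter_par_fixed/par_r0. Qed.

Lemma is_childP u v : is_child u v <-> v <> r0 T /\ par v = u.
Proof.
rewrite /is_child inE; split => [/andP[/eqP ? /eqP //]|[/eqP ? ->]].
by rewrite eqxx andbT.
Qed.

Lemma child_neq_r0 u v : is_child u v -> v <> r0 T.
Proof. by case/is_childP. Qed.

Lemma tle_refl a : tle a a.
Proof. by exists 0. Qed.

Lemma tle_trans a b c : tle a b -> tle b c -> tle a c.
Proof. by move=> [n <-] [m <-]; exists (m + n); rewrite iterD. Qed.

Lemma tle_par a : tle a (par a).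
Proof. by exists 1. Qed.

Lemma tle_child u v : is_child u v -> tle v u.
Proof. by move=> /is_childP[_ <-]; apply: tle_par. Qed.

(* A cycle a -> ... -> b -> ... -> a of positive length would never reach 0_T
   unless a = 0_T, a fixed point of [par]. *)
Lemma tle_antisym a b : tle a b -> tle b a -> a = b.
Proof.
move=> [n Hn] [m Hm].
have cyc k : iter (k * (m + n)) (@par T) a = a.
  by elim: k => [|k IH] //; rewrite mulSn iterD IH iterD Hn.
have [N HN] := reach_r0 a.
have [/eqP|pos] := posnP (m + n).
  by rewrite addn_eq0 => /andP[_ /eqP n0]; rewrite -Hn n0.
have a0 : a = r0 T.
  have le : N <= N * (m + n) by rewrite leq_pmulr.
  by rewrite -{1}(cyc N) -(subnK le) iterD HN iter_par_r0.
by rewrite -Hn a0 iter_par_r0.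
Qed.

Lemma tle_ancestors_total a b c : tle a b -> tle a c -> tle b c \/ tle c b.
Proof.
move=> [n <-] [m <-]; have [h|h] := leqP n m.
  by left; exists (m - n); rewrite -iterD subnK.
by right; exists (n - m); rewrite -iterD subnK // ltnW.
Qed.

Lemma tle_eq_or_par a b : tle a b -> a = b \/ tle (par a) b.
Proof. by case=> [[|n] <-]; [left | right; exists n; rewrite -iterSr]. Qed.

Lemma tlt_not_leaf a b : tle a b -> a <> b -> ~ is_leaf b.
Proof.
case=> [[|k] <-] // _ [hb0 hleaf].
have : iter k (@par T) a \in children (iter k.+1 (@par T) a).
  rewrite inE eqxx andbT; apply/eqP => e; apply: hb0; by rewrite iterS e par_r0.
by rewrite hleaf inE.
Qed.

Lemma is_lca_child u v x z :
  is_child u v -> tle x u -> ~ tle x v -> tle z v -> is_lca x z u.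
Proof.
move=> cuv hxu hxv hzv; split; [by [] | split; first exact: tle_trans hzv (tle_child cuv)].
move=> t hxt hzt; have [hvt|htv] := tle_ancestors_total hzv hzt; last first.
  by case: hxv; apply: tle_trans hxt htv.
move/is_childP: cuv => [_ <-]; case: (tle_eq_or_par hvt) => // e.
by case: hxv; rewrite e.
Qed.

Definition tleb a b : bool := if excluded_middle_informative (tle a b) then true else false.

Lemma tlebP a b : reflect (tle a b) (tleb a b).
Proof. by rewrite /tleb; case: excluded_middle_informative => h; constructor. Qed.

Lemma lca_exists a b : exists c, is_lca a b c.
Proof.
have exP : exists k, tleb b (iter k (@par T) a).
  have [N HN] := reach_r0 a; have [M HM] := reach_r0 b.
  by exists N; apply/tlebP; rewrite HN; exists M.
case: (ex_minnP exP) => k /tlebP hk hmin.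
exists (iter k (@par T) a); split; first by exists k.
split => // t [m <-] hb; have [h|h] := leqP k m.
  by exists (m - k); rewrite -iterD subnK.
by have := hmin m (introT (tlebP _ _) hb); rewrite leqNgt h.
Qed.

Definition below v : {set T} := [set t | tleb t v].

Lemma below_child_proper u v : is_child u v -> below v \proper below u.
Proof.
move=> cuv; have hvu := tle_child cuv; apply/properP; split.
  apply/subsetP => t; rewrite !inE => /tlebP h.
  by apply/tlebP; apply: tle_trans hvu.
exists u; first by rewrite inE; apply/tlebP/tle_refl.
rewrite inE; apply/negP => /tlebP huv.
move/is_childP: cuv => [v0 hpar]; have e := tle_antisym hvu huv.
have [N] := reach_r0 v; rewrite iter_par_fixed // hpar; exact: esym.
Qed.

Lemma leaf_below v : v <> r0 T -> exists z, is_leaf z /\ tle z v.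
Proof.
move: {2}#|below v| (leqnn #|below v|) => n; elim: n v => [|n IH] v hn hv.
  have : 0 < #|below v| by apply/card_gt0P; exists v; rewrite inE; apply/tlebP/tle_refl.
  by rewrite ltnNge hn.
case: (set_0Vmem (children v)) => [h0|[c hc]].
  by exists v; split => //; apply: tle_refl.
have [z [hz hzc]] : exists z, is_leaf z /\ tle z c.
  apply: IH (child_neq_r0 hc); rewrite -ltnS; exact: leq_trans (proper_card (below_child_proper hc)) hn.
by exists z; split => //; apply: tle_trans hzc (tle_child hc).
Qed.

Lemma tle_root : exists rho, rho <> r0 T /\ par rho = r0 T /\
  forall v, v <> r0 T -> tle v rho.
Proof.
have := r0_one_child T => /eqP /cards1P [rho hr].
have hin t : (t != r0 T) && (par t == r0 T) = (t == rho).
  by have := congr1 (fun A : {set T} => t \in A) hr; rewrite !inE.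
have /andP[/eqP rho0 /eqP prho] := etrans (hin rho) (eqxx rho).
exists rho; do 2!split => //; move=> v hv.
have [N] := reach_r0 v; elim: N v hv => [|N IH] v hv //; rewrite iterSr => h.
have [e|e] := eqVneq (par v) (r0 T).
  have /eqP -> : v == rho by rewrite -hin e eqxx andbT; apply/eqP.
  exact: tle_refl.
exact: tle_trans (tle_par v) (IH _ (elimN eqP e) h).
Qed.

Lemma lca_neq_r0 x y u : x <> r0 T -> y <> r0 T -> is_lca x y u -> u <> r0 T.
Proof.
move=> hx hy [_ [_ hmin]] hu; have [rho [rho0 [prho hrho]]] := tle_root.
apply: rho0; rewrite -prho; apply: tle_antisym (tle_par rho) _; rewrite prho -hu.
exact: hmin (hrho x hx) (hrho y hy).
Qed.

End PlantedTree.

Section ExtendedOrder.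
Variable S : ptree.
Implicit Types A B C : velt S.

Lemma sle_trans A B C : sle A B -> sle B C -> sle A C.
Proof.
case: A => [a|a]; case: B => [b|b]; case: C => [c|c] //=.
- exact: tle_trans.
- exact: tle_trans.
- by move=> h1 h2; apply: tle_trans (tle_trans h1 (tle_par _)) h2.
- by move=> h1 [<-|h2] //; apply: tle_trans h1 (tle_trans (tle_par _) h2).
- exact: tle_trans.
- by move=> h1 h2; right; apply: tle_trans h1 h2.
- by move=> [<-|h1] h2 //; apply: tle_trans h1 (tle_trans (tle_par _) h2).
- move=> [<-|h1] [<-|h2]; [by left|by right|by right|].
  by right; apply: tle_trans h1 (tle_trans (tle_par _) h2).
Qed.

Definition lower_end A : S := match A with inl w => w | inr q => q end.

Lemma sle_ancestors_total (c : S) A B :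
  sle (inl c) A -> sle (inl c) B -> sle A B \/ sle B A.
Proof.
have lower_end_above A' : sle (inl c) A' -> tle c (lower_end A') by case: A'.
move=> /lower_end_above hA /lower_end_above hB.
case: (tle_ancestors_total hA hB); case: A {hA} => [a|a]; case: B {hB} => [b|b] /= h.
- by left.
- by left.
- by case: (tle_eq_or_par h) => [->|h']; [right; apply: tle_refl|left].
- by left; case: (tle_eq_or_par h) => [->|h']; [left|right].
- by right.
- by case: (tle_eq_or_par h) => [->|h']; [left; apply: tle_refl|right].
- by right.
- by right; case: (tle_eq_or_par h) => [->|h']; [left|right].
Qed.

End ExtendedOrder.

Section Reconciliation.
Variables (T S : ptree) (sigma : T -> S) (mu : T -> velt S).
Hypothesis rec : reconciliation sigma mu.
Hypothesis R4 : axiom_R4 sigma mu.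

Lemma mu_above_leaf a v : is_leaf a -> tle a v -> sle (inl (sigma a)) (mu v).
Proof.
have [_ [_ [_ [R1 [R2 _]]]]] := rec; move=> La hav.
have [<-|nav] := classic (a = v); first by rewrite (R1 a La); apply: tle_refl.
by rewrite -(R1 a La); apply: R2.
Qed.

Variables (x y u : T) (s w : S).
Hypotheses (Lx : is_leaf x) (Ly : is_leaf y).
Hypotheses (lca_xy : is_lca x y u) (lca_sxy : is_lca (sigma x) (sigma y) s).
Hypotheses (mu_u : mu u = inl w) (inner_w : is_inner w).

Lemma child_above_leaf_below_lca v : is_child u v ->
  exists a, is_leaf a /\ tle a v /\ tle (sigma a) s.
Proof.
move=> cuv; have [hxv|hxv] := classic (tle x v).
  by exists x; do 2!split => //; case: lca_sxy.
have [z [Lz hzv]] := leaf_below (child_neq_r0 cuv).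
have lca_xz := is_lca_child cuv (proj1 lca_xy) hxv hzv.
have [s' lca_sxz] := lca_exists (sigma x) (sigma z).
have inner_mu_u : is_inner_image (mu u) by exists w.
have e := R4 Lx Ly Lz lca_xy lca_xz erefl inner_mu_u lca_sxy lca_sxz.
by exists z; do 2!split => //; rewrite e; case: lca_sxz => _ [].
Qed.

Lemma mu_child_comparable_lca v : is_child u v ->
  sle (mu v) (inl s) \/ sle (inl s) (mu v).
Proof.
move=> /child_above_leaf_below_lca [a [La [hav has]]].
have has' : sle (inl (sigma a)) (inl s) by [].
exact: sle_ancestors_total (mu_above_leaf La hav) has'.
Qed.

Lemma inner_image_not_above_lca : ~ slt (inl s) (inl w).
Proof.
have [_ [_ [_ [_ [_ [R3i R3ii]]]]]] := rec; move=> [hsw nsw].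
have [v1 [v2 [c1 [c2 [v12 lca_w]]]]] := R3i u w mu_u inner_w.
have [inc12 inc21] := R3ii u w mu_u inner_w v1 v2 c1 c2 v12.
case: (mu_child_comparable_lca c1) => h1; case: (mu_child_comparable_lca c2) => h2.
- by apply: nsw; congr inl; apply: tle_antisym hsw (proj2 (proj2 lca_w) s h1 h2).
- exact: inc12 (sle_trans h1 h2).
- exact: inc21 (sle_trans h2 h1).
- by case: (sle_ancestors_total h1 h2).
Qed.

End Reconciliation.

Theorem lemma3 (T S : ptree) (sigma : T -> S) (mu : T -> velt S) :
  reconciliation sigma mu -> axiom_R4 sigma mu ->
  forall x y : T, is_leaf x -> is_leaf y -> sigma x <> sigma y ->
  forall (u : T) (s : S), is_lca x y u -> is_lca (sigma x) (sigma y) s ->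
    slt (inl s) (mu u) ->
    exists q : S, mu u = inr q.
Proof.
move=> rec R4 x y Lx Ly _ u s lca_xy lca_sxy.
case mu_u: (mu u) => [w|q] hsw; last by exists q.
have [_ [_ [R0 _]]] := rec.
have w0 : w <> r0 S.
  move=> e; apply: (lca_neq_r0 Lx.1 Ly.1 lca_xy); apply/R0; by rewrite mu_u e.
have nleaf_w : ~ is_leaf w.
  case: hsw => hle hne; apply: (@tlt_not_leaf _ s w hle) => e.
  by apply: hne; rewrite e.
have inner_w : is_inner w by [].
by case: (inner_image_not_above_lca rec R4 Lx Ly lca_xy lca_sxy mu_u inner_w hsw).
Qed.
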